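(* Let $f:\mathbb{N}_+\to\mathbb{N}_+$ be strictly increasing and let $g:\mathbb{R}_{\ge0}\to\mathbb{R}_{\ge0}$ be continuous and bijective with $g(n)=f(n)$ for all $n\in\mathbb{N}_+$. Then $L_{\mathbb{N}_+}(f)^{-1}\in\Theta(g^{-1})$.
   Context: For $h:\mathbb{N}_+\to\mathbb{N}_+$, the linear interpolation $L_{\mathbb{N}_+}(h):\mathbb{R}_{\ge0}\to\mathbb{R}_{\ge0}$ is the polygonal chain starting at $(0,0)$ and passing through the points $(n,h(n))$, $n\in\mathbb{N}_+$, in increasing order of $n$. $\Theta$ denotes asymptotic equivalence up to constant factors as $x\to\infty$. *)

From Stdlib Require Export Reals Lra Lia.
Open Scope R_scope.

(* h extended to 0 by h(0) = 0 (the chain starts at (0,0)). *)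
Definition ext0 (h : nat -> nat) (n : nat) : R :=
  match n with O => 0 | S _ => INR (h n) end.

Definition nfloor (x : R) : nat := Z.to_nat (Int_part x).

(* Linear interpolation L_{N+}(h) : polygonal chain through (0,0) and (n, h n), n >= 1.
   On [k, k+1] (k = floor x) it is the affine segment between (k, h k) and (k+1, h (k+1)). *)
Definition linterp (h : nat -> nat) (x : R) : R :=
  let k := nfloor x in
  ext0 h k + (x - INR k) * (ext0 h (S k) - ext0 h k).

Definition cont_on_nonneg (g : R -> R) : Prop :=
  forall x, 0 <= x -> forall eps, 0 < eps -> exists delta, 0 < delta /\
    forall y, 0 <= y -> Rabs (y - x) < delta -> Rabs (g y - g x) < eps.

Definition bij_nonneg (g : R -> R) : Prop :=
  (forall x, 0 <= x -> 0 <= g x) /\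
  (forall x y, 0 <= x -> 0 <= y -> g x = g y -> x = y) /\
  (forall y, 0 <= y -> exists x, 0 <= x /\ g x = y).

(* ginv is the inverse of a bijection g of [0,+oo): ginv maps [0,+oo) into [0,+oo)
   and g (ginv y) = y there (this determines ginv uniquely on [0,+oo)). *)
Definition is_inv_nonneg (g ginv : R -> R) : Prop :=
  forall y, 0 <= y -> 0 <= ginv y /\ g (ginv y) = y.

Definition bigTheta (u v : R -> R) : Prop :=
  exists c1 c2 x0, 0 < c1 /\ 0 < c2 /\
    forall x, x0 <= x -> c1 * Rabs (v x) <= Rabs (u x) /\ Rabs (u x) <= c2 * Rabs (v x).

(* For y >= f 1 choose n >= 1 with f n <= y < f (n+1).  The polygonal chain maps [n, n+1]
   increasingly onto [f n, f (n+1)], and by the intermediate value theorem g takes the value y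
   on [n, n+1] as well; injectivity then puts both inverses at y in [n, n+1].  Two numbers in
   [n, n+1] with n >= 1 differ at most by a factor 2. *)
From Stdlib Require Import ZArith Ranalysis5.

Lemma nfloor_spec x : 0 <= x -> INR (nfloor x) <= x < INR (nfloor x) + 1.
Proof.
  intros Hx. destruct (base_Int_part x) as [Hle Hgt].
  assert (Hz : (0 <= Int_part x)%Z).
  { assert (-1 < Int_part x)%Z by (apply lt_IZR; lra). lia. }
  unfold nfloor. rewrite INR_IZR_INZ, Z2Nat.id by exact Hz. lra.
Qed.

Lemma bigTheta_of_unit_brackets (u v : R -> R) (x0 : R) :
  (forall y, x0 <= y -> exists n, 1 <= n /\ n <= u y <= n + 1 /\ n <= v y <= n + 1) ->
  bigTheta u v.
Proof.
  intros Hbr. exists (/2), 2, x0. split; [lra|]. split; [lra|].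
  intros y Hy. destruct (Hbr y Hy) as (n & Hn & Hu & Hv).
  rewrite !Rabs_right by lra. lra.
Qed.

Section IncreasingSequence.

Variable a : nat -> R.
Hypothesis a_incr : forall i j, (i < j)%nat -> a i < a j.

Lemma increasing_le i j : (i <= j)%nat -> a i <= a j.
Proof.
  intros Hij. destruct (Nat.eq_dec i j) as [<-|Hne]; [lra|].
  left. apply a_incr. lia.
Qed.

Lemma increasing_bracket_unique k n y :
  a k <= y < a (S k) -> a n <= y < a (S n) -> k = n.
Proof.
  intros Hk Hn. destruct (Nat.lt_trichotomy k n) as [C|[C|C]]; [|exact C|].
  - pose proof (increasing_le (S k) n C). lra.
  - pose proof (increasing_le (S n) k C). lra.
Qed.

Lemma exists_bracket y m :
  a 1 <= y -> y < a (S m) -> exists n, (1 <= n)%nat /\ a n <= y < a (S n).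
Proof.
  intros H1. induction m as [|m IH]; intros Hm; [lra|].
  destruct (Rlt_le_dec y (a (S m))) as [Hlt|Hge].
  - exact (IH Hlt).
  - exists (S m). split; [lia|lra].
Qed.

End IncreasingSequence.

Section StrictlyIncreasingNat.

Variable f : nat -> nat.
Hypothesis f_pos : forall n, (0 < n)%nat -> (0 < f n)%nat.
Hypothesis f_incr : forall m n, (0 < m)%nat -> (m < n)%nat -> (f m < f n)%nat.

Lemma le_f_self m : (0 < m)%nat -> (m <= f m)%nat.
Proof.
  induction m as [|m IH]; intros Hm; [lia|].
  destruct m as [|m]; [specialize (f_pos 1%nat); lia|].
  specialize (IH ltac:(lia)). specialize (f_incr (S m) (S (S m)) ltac:(lia) ltac:(lia)). lia.
Qed.

Lemma ext0_incr i j : (i < j)%nat -> ext0 f i < ext0 f j.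
Proof.
  intros Hij. destruct j as [|j]; [lia|]. destruct i as [|i]; simpl.
  - apply lt_0_INR, f_pos. lia.
  - apply lt_INR, f_incr; lia.
Qed.

Lemma ext0_bracket y :
  ext0 f 1 <= y -> exists n, (1 <= n)%nat /\ ext0 f n <= y < ext0 f (S n).
Proof.
  intros Hy. destruct (INR_unbounded y) as [m Hm].
  apply (exists_bracket _ y m Hy).
  apply Rlt_le_trans with (INR (S m)); [rewrite S_INR; lra|].
  apply le_INR, le_f_self. lia.
Qed.

Lemma linterp_floor_bounds x :
  0 <= x -> ext0 f (nfloor x) <= linterp f x < ext0 f (S (nfloor x)).
Proof.
  intros Hx. unfold linterp.
  destruct (nfloor_spec x Hx) as [Hlo Hhi].
  pose proof (ext0_incr (nfloor x) (S (nfloor x)) (Nat.lt_succ_diag_r _)).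
  split; nra.
Qed.

Lemma linterp_preimage_bracket x n :
  0 <= x -> ext0 f n <= linterp f x < ext0 f (S n) -> INR n <= x < INR n + 1.
Proof.
  intros Hx Hn.
  assert (Hk : nfloor x = n).
  { apply (increasing_bracket_unique (ext0 f) ext0_incr _ _ (linterp f x)); [|exact Hn].
    exact (linterp_floor_bounds x Hx). }
  rewrite <- Hk. exact (nfloor_spec x Hx).
Qed.

End StrictlyIncreasingNat.

Section ContinuousBijection.

Variable g : R -> R.
Hypothesis g_cont : cont_on_nonneg g.

Lemma cont_on_nonneg_continuity_pt a : 0 < a -> continuity_pt g a.
Proof.
  intros Ha eps Heps.
  destruct (g_cont a (Rlt_le _ _ Ha) eps Heps) as (d & Hd & Hclose).
  exists (Rmin d a). split; [apply Rmin_pos; lra|].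
  intros t [_ Ht]. simpl in *. unfold R_dist in *.
  pose proof (Rmin_l d a). pose proof (Rmin_r d a).
  apply Hclose; [|lra].
  apply Rabs_def2 in Ht. lra.
Qed.

Lemma cont_on_nonneg_ivt a b y :
  0 < a < b -> g a <= y <= g b -> exists z, a <= z <= b /\ g z = y.
Proof.
  intros Hab [Hay Hyb].
  destruct (Rle_lt_or_eq_dec _ _ Hay) as [Hay' | <-].
  2:{ exists a. split; [lra|reflexivity]. }
  destruct (Rle_lt_or_eq_dec _ _ Hyb) as [Hyb' | ->].
  2:{ exists b. split; [lra|reflexivity]. }
  assert (Hc : forall t, a <= t <= b -> continuity_pt (fun s => g s - y) t).
  { intros t Ht. apply continuity_pt_minus.
    - apply cont_on_nonneg_continuity_pt. lra.
    - apply continuity_pt_const. intros ? ?. reflexivity. }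
  destruct (IVT_interv (fun s => g s - y) a b Hc ltac:(lra) ltac:(lra) ltac:(lra))
    as (z & Hz & Hgz).
  exists z. split; [exact Hz|lra].
Qed.

Hypothesis g_bij : bij_nonneg g.

Lemma inv_nonneg_between ginv a b y :
  is_inv_nonneg g ginv -> 0 < a < b -> g a <= y <= g b -> a <= ginv y <= b.
Proof.
  intros Hinv Hab Hy.
  destruct (cont_on_nonneg_ivt a b y Hab Hy) as (z & Hz & Hgz).
  assert (Hy0 : 0 <= y) by (pose proof (proj1 g_bij z ltac:(lra)); lra).
  destruct (Hinv y Hy0) as [Hinv0 Hginv].
  destruct g_bij as (_ & g_inj & _).
  replace (ginv y) with z; [exact Hz|].
  apply g_inj; lra.
Qed.

End ContinuousBijection.

Theorem lemma3 (f : nat -> nat) (g Linv ginv : R -> R)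
  (f_pos : forall n, (0 < n)%nat -> (0 < f n)%nat)
  (f_incr : forall m n, (0 < m)%nat -> (m < n)%nat -> (f m < f n)%nat)
  (g_cont : cont_on_nonneg g)
  (g_bij : bij_nonneg g)
  (g_interp : forall n, (0 < n)%nat -> g (INR n) = INR (f n))
  (hLinv : is_inv_nonneg (linterp f) Linv)
  (hginv : is_inv_nonneg g ginv) :
  bigTheta Linv ginv.
Proof.
  apply (bigTheta_of_unit_brackets _ _ (INR (f 1%nat))).
  intros y Hy.
  assert (Hy0 : 0 <= y) by (pose proof (pos_INR (f 1%nat)); lra).
  destruct (ext0_bracket f f_pos f_incr y Hy) as (n & Hn & Hfn & Hfn1).
  assert (Hn1 : 1 <= INR n) by (apply (le_INR 1); exact Hn).
  exists (INR n). split; [exact Hn1|]. split.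
  - destruct (hLinv y Hy0) as [HL0 HLy].
    rewrite <- HLy in Hfn, Hfn1.
    pose proof (linterp_preimage_bracket f f_pos f_incr _ _ HL0 (conj Hfn Hfn1)). lra.
  - apply (inv_nonneg_between g g_cont g_bij ginv _ _ y hginv); [lra|].
    assert (Hext : ext0 f n = INR (f n)) by (destruct n; [lia|reflexivity]).
    rewrite <- S_INR, !g_interp by lia. simpl in Hfn1. lra.
Qed.
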